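(* Let $\mathcal H_k$ be a family of $k$-wise independent functions $[n]\to[n]$ with $k\ge 2\log n$. Let $t<n/2$, let $j=\lfloor \log(n/2t)\rfloor$, and let $T=\{x_1,\dots,x_t\}\subseteq[n]$ be a set of $t$ distinct cards (the cards remaining in the deck, with $x_1$ the next card to be drawn). For $h\in\mathcal H_k$ let $S^h_j=\{x\in[n] : 2^{j-1} < h(x)\le 2^j\}$. Then $$\Pr_{h\sim\mathcal H_k}\Big[S^h_j\cap T=\{x_1\}\ \Big|\ |S^h_j\cap T|=1\Big]\ \ge\ \frac{1}{t+o(1)},$$ where $o(1)\to 0$ as $n\to\infty$.
   Context: A family $\mathcal H_k$ of functions $h:[n]\to[n]$ is $k$-wise independent if for every $k$ distinct $x_1,\dots,x_k\in[n]$ and every $y_1,\dots,y_k\in[n]$, $\Pr_{h\sim\mathcal H_k}[(h(x_1),\dots,h(x_k))=(y_1,\dots,y_k)]=n^{-k}$. $\log$ is base 2. *)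

From mathcomp Require Import all_boot all_order all_algebra.
Set Implicit Arguments. Unset Strict Implicit. Unset Printing Implicit Defensive.
Import Order.TTheory GRing.Theory Num.Theory.
Local Open Scope ring_scope.

(* [n] = {1,...,n} is modelled by 'I_n = {0,...,n-1}; the element y : 'I_n
   stands for the number y+1 in [n].  A family of functions [n] -> [n] is a
   finite index type I with H : I -> {ffun 'I_n -> 'I_n}; h ~ H means
   i uniform on I, h = H i (a multiset of functions, uniform distribution). *)

Definition prH (n : nat) (I : finType) (H : I -> {ffun 'I_n -> 'I_n})
    (E : {ffun 'I_n -> 'I_n} -> bool) : rat :=
  #|[set i | E (H i)]|%:R / #|I|%:R.

Definition condprH (n : nat) (I : finType) (H : I -> {ffun 'I_n -> 'I_n})
    (A B : {ffun 'I_n -> 'I_n} -> bool) : rat :=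
  prH H (fun h => A h && B h) / prH H B.

Definition kwise_indep (n k : nat) (I : finType)
    (H : I -> {ffun 'I_n -> 'I_n}) : Prop :=
  forall (xs ys : k.-tuple 'I_n), uniq xs ->
    prH H (fun h => [forall i : 'I_k, h (tnth xs i) == tnth ys i])
      = 1 / (n%:R ^+ k).

(* S^h_j = { x in [n] : 2^(j-1) < h(x) <= 2^j }, with h(x) read as the
   number (h x).+1 in [n]; 2^(j-1) < v is written 2^j < 2 v (exact, also j=0) *)
Definition Sj (n j : nat) (h : {ffun 'I_n -> 'I_n}) : {set 'I_n} :=
  [set x | (2 ^ j < 2 * (h x).+1)%N && ((h x).+1 <= 2 ^ j)%N].

(* Let V be the block of values (2^(j-1), 2^j], S = h^-1(V) and p = |V|/n, so that
   2tp <= 1.  For x in T, S :&: T = {x} means x \in S and S misses T \ {x}.  Truncating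
   the inclusion-exclusion expansion of this indicator at level r < k bounds it from
   below (r odd) or above (r even) by [x \in S] * sum_(i <= r) (-1)^i C(|S :&: T\{x}|, i),
   whose expectation only involves events "a given set of i + 1 <= k points is mapped
   into V"; by k-wise independence it equals G_r = sum_(i <= r) (-1)^i C(t-1, i) p^(i+1),
   whatever x is.  Taking r odd with r + 3 >= k gives Pr[S :&: T = {x1}] >= G_r and
   Pr[|S :&: T| = 1] <= t G_(r+1), and G_(r+1) - G_r <= p 2^-(r+1) = O(p / tn) since
   2^k >= n^2.  As Pr[S :&: T = {x1}] >= G_1 >= p/2, the ratio is >= 1/(t + 8/n). *)

From mathcomp Require Import all_boot all_order all_algebra.
From mathcomp Require Import ring lra zify.
Import Order.TTheory GRing.Theory Num.Theory.
Set Implicit Arguments. Unset Strict Implicit. Unset Printing Implicit Defensive.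
Local Open Scope ring_scope.

Lemma exists_superset_card (T : finType) (A : {set T}) m :
  (#|A| <= m <= #|T|)%N -> exists2 B : {set T}, A \subset B & #|B| = m.
Proof.
move=> /andP[leAm lemT]; rewrite -(subnKC leAm) in lemT *.
move: (m - #|A|)%N lemT => d; clear leAm.
elim: d A => [|d IHd] A lemT; first by exists A; rewrite ?addn0.
have /card_gt0P[y] : (0 < #|~: A|)%N by have := cardsC A; lia.
rewrite inE => Ay.
have [B sAyB cardB] : exists2 B : {set T}, y |: A \subset B & #|B| = (#|y |: A| + d)%N.
  by apply: IHd; rewrite cardsU1 Ay; lia.
exists B; last by rewrite cardB cardsU1 Ay addSnnS.
exact: subset_trans (subsetUr _ _) sAyB.
Qed.

Section Expectation.
Variables (n : nat) (I : finType) (H : I -> {ffun 'I_n -> 'I_n}).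

Definition expH (f : {ffun 'I_n -> 'I_n} -> rat) : rat := (\sum_i f (H i)) / #|I|%:R.

Lemma prH_expH E : prH H E = expH (fun h => (E h)%:R).
Proof.
rewrite /prH /expH -sum1dep_card natr_sum big_mkcond /=.
by congr (_ / _); apply: eq_bigr => i _; case: (E (H i)).
Qed.

Lemma eq_expH f g : f =1 g -> expH f = expH g.
Proof. by move=> eqfg; rewrite /expH; under eq_bigr do rewrite eqfg. Qed.

Lemma eq_prH E E' : E =1 E' -> prH H E = prH H E'.
Proof. by move=> eqE; rewrite !prH_expH; apply: eq_expH => h; rewrite eqE. Qed.

Lemma eq_condprH A A' B B' : A =1 A' -> B =1 B' -> condprH H A B = condprH H A' B'.
Proof.
move=> eqA eqB; rewrite /condprH (eq_prH eqB).
by rewrite (eq_prH (E' := fun h => A' h && B' h)) // => h; rewrite eqA eqB.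
Qed.

Lemma expH_sum (J : finType) (P : pred J) (F : J -> {ffun 'I_n -> 'I_n} -> rat) :
  expH (fun h => \sum_(j | P j) F j h) = \sum_(j | P j) expH (F j).
Proof. by rewrite /expH exchange_big mulr_suml. Qed.

Lemma expHZ c f : expH (fun h => c * f h) = c * expH f.
Proof. by rewrite /expH -mulr_sumr mulrA. Qed.

Lemma prH_ge0 E : 0 <= prH H E.
Proof. by rewrite divr_ge0 ?ler0n. Qed.

Lemma ler_expH f g : (forall h, f h <= g h) -> expH f <= expH g.
Proof. by move=> lefg; rewrite ler_wpM2r ?invr_ge0 ?ler0n ?ler_sum. Qed.

End Expectation.

Section KwiseIndependence.
Variables (n k : nat) (I : finType) (H : I -> {ffun 'I_n -> 'I_n}).
Hypothesis Hk : kwise_indep k H.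

Lemma prH_kwise_family (W : {set 'I_n}) (F : 'I_n -> {set 'I_n}) : #|W| = k ->
  prH H (fun h => [forall y in W, h y \in F y]) = \prod_(y in W) (#|F y|%:R / n%:R).
Proof.
move=> cardW; subst k.
pose xs := Tuple (enum_tupleP W); pose G l := F (tnth xs l).
pose trace (h : {ffun 'I_n -> 'I_n}) : {ffun 'I_#|W| -> 'I_n} := [ffun l => h (tnth xs l)].
have in_family (h : {ffun 'I_n -> 'I_n}) :
    [forall y in W, h y \in F y] = (trace h \in family G).
  apply/forall_inP/familyP => [inF l | inG y Wy].
    by rewrite ffunE; apply: inF; rewrite -mem_enum (mem_tnth l xs).
  have /tnthP[l ->] : y \in xs by rewrite mem_enum.
  by have := inG l; rewrite ffunE.
have indicatorE (h : {ffun 'I_n -> 'I_n}) : ([forall y in W, h y \in F y])%:R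
    = \sum_(g in family G) ([forall l, h (tnth xs l) == g l])%:R :> rat.
  rewrite in_family; set gh := trace h.
  have fibreE (g : {ffun 'I_#|W| -> 'I_n}) : [forall l, h (tnth xs l) == g l] = (g == gh).
    apply/forallP/eqP => [eqg | -> l]; last by rewrite ffunE.
    by apply/ffunP => l; rewrite ffunE; apply/esym/eqP.
  under eq_bigr do rewrite fibreE.
  have [Ggh | notGgh] := boolP (gh \in family G).
    by rewrite (bigD1 gh) //= eqxx big1 ?addr0 // => g /andP[_ /negPf ->].
  by rewrite big1 // => g Gg; case: eqP => // eqg; rewrite -eqg Gg in notGgh.
have fibreE (g : {ffun 'I_#|W| -> 'I_n}) :
    expH H (fun h => ([forall l, h (tnth xs l) == g l])%:R) = 1 / n%:R ^+ #|W|.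
  rewrite -(prH_expH H (fun h => [forall l, h (tnth xs l) == g l])).
  rewrite -(@Hk xs [tuple g l | l < #|W|] (enum_uniq (mem W))).
  by apply: eq_prH => h; apply: eq_forallb => l; rewrite tnth_mktuple.
rewrite prH_expH (eq_expH H indicatorE) expH_sum.
rewrite [LHS](eq_bigr (fun=> 1 / n%:R ^+ #|W|)); last by move=> g _; exact: fibreE.
rewrite sumr_const card_family foldrE big_map big_enum /= prodf_div prodr_const.
have -> : (\prod_(l in 'I_#|W|) #|G l| = \prod_(y in W) #|F y|)%N.
  by rewrite -[RHS]big_enum (big_tuple _ _ xs); apply: eq_bigl => l.
by rewrite -[LHS]mulr_natl natr_prod mulrA mulr1.
Qed.

Lemma prH_kwise_subset (W V : {set 'I_n}) : (#|W| <= k <= n)%N ->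
  prH H (fun h => W \subset h @^-1: V) = (#|V|%:R / n%:R) ^+ #|W|.
Proof.
move=> /andP[leWk lekn].
have [W' sWW' cardW'] := @exists_superset_card _ W k ltac:(by rewrite leWk card_ord).
pose F y := if y \in W then V else setT.
rewrite (eq_prH _ (E' := fun h => [forall y in W', h y \in F y])); last first.
  move=> h; apply/subsetP/forall_inP => [sWV y W'y | inF y Wy].
    by rewrite /F; case: ifP => [Wy | _]; [have := sWV y Wy; rewrite inE | rewrite inE].
  by have := inF y (subsetP sWW' y Wy); rewrite /F Wy inE.
rewrite prH_kwise_family // (big_setID W) /= (setIidPr sWW').
rewrite (eq_bigr (fun=> #|V|%:R / n%:R)) => [|y Wy]; last by rewrite /F Wy.
rewrite prodr_const big1 ?mulr1 // => y /setDP[_ /negPf notWy].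
have n_gt0 : (0 < n)%N := leq_ltn_trans (leq0n y) (ltn_ord y).
by rewrite /F notWy cardsT card_ord divff // pnatr_eq0 -lt0n.
Qed.

End KwiseIndependence.

Lemma mem_mul_bin_cardsI (T : finType) (S A : {set T}) x i :
  ((x \in S) * 'C(#|S :&: A|, i)
     = \sum_(U in [set U : {set T} | U \subset A & #|U| == i]) (x |: U \subset S))%N.
Proof.
rewrite -cards_draws -sum1_card big_distrr /= big_mkcond [RHS]big_mkcond /=.
apply: eq_bigr => U _; rewrite !inE subsetI subUset sub1set.
by case: (x \in S); case: (U \subset S); case: (U \subset A); case: (#|U| == i).
Qed.

Lemma bin_leq_expn m r : ('C(m, r) <= m ^ r)%N.
Proof.
apply: leq_trans (leq_pmulr _ (fact_gt0 r)) _.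
rewrite bin_ffact ffact_prod (@leq_trans (\prod_(i < r) m)) //.
  by apply: leq_prod => i _; apply: leq_subr.
by rewrite prod_nat_const card_ord.
Qed.

Lemma alt_bin_partial_sum (R : comPzRingType) z r :
  \sum_(i < r.+1) (-1) ^+ i * ('C(z, i)%:R : R)
    = if z == 0%N then 1 else (-1) ^+ r * 'C(z.-1, r)%:R.
Proof.
elim: r => [|r IHr]; first by rewrite big_ord1 !bin0 expr0 mul1r; case: ifP.
rewrite big_ord_recr /= {}IHr; case: z => [|z] /=; first by rewrite bin0n mulr0 addr0.
by rewrite binS natrD exprS; ring.
Qed.

Lemma alt_bin_partial_sum_odd (R : realDomainType) z r : odd r ->
  \sum_(i < r.+1) (-1) ^+ i * ('C(z, i)%:R : R) <= (z == 0%N)%:R.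
Proof.
move=> odd_r; rewrite alt_bin_partial_sum; case: ifP => // _.
by rewrite -signr_odd odd_r expr1 mulN1r oppr_le0 ler0n.
Qed.

Lemma alt_bin_partial_sum_even (R : realDomainType) z r : ~~ odd r ->
  (z == 0%N)%:R <= \sum_(i < r.+1) (-1) ^+ i * ('C(z, i)%:R : R).
Proof.
move=> even_r; rewrite alt_bin_partial_sum; case: ifP => // _.
by rewrite -signr_odd (negPf even_r) expr0 mul1r ler0n.
Qed.

Lemma bin_tail_le (R : realFieldType) m r (p : R) : 0 <= p -> m%:R * p <= 1 / 2 ->
  'C(m, r)%:R * p ^+ r.+1 <= p / 2 ^+ r.
Proof.
move=> p_ge0 mp_le; rewrite exprSr mulrA [p / _]mulrC ler_wpM2r //.
apply: (@le_trans _ _ ((m%:R * p) ^+ r)).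
  by rewrite exprMn ler_wpM2r ?exprn_ge0 // -natrX ler_nat bin_leq_expn.
by rewrite -exprVn lerXn2r ?nnegrE ?mulr_ge0 ?invr_ge0 ?ler0n // -div1r.
Qed.

Lemma bin_tail_mul_le (R : realFieldType) (t n r : nat) (p : R) : (0 < n)%N -> 0 <= p ->
  t.-1%:R * p <= 1 / 2 -> (t * n <= 2 ^ r.+3)%N ->
  t%:R * ('C(t.-1, r.+1)%:R * p ^+ r.+2) <= 8 / n%:R * (p / 2).
Proof.
move=> n_gt0 p_ge0 tp_le tn_le.
apply: le_trans (ler_wpM2l (ler0n _ _) (bin_tail_le r.+1 p_ge0 tp_le)) _.
have : ((t * n)%:R : R) <= (4 * 2 ^ r.+1)%:R by rewrite ler_nat -[4%N]/(2 ^ 2)%N -expnD.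
have n'_gt0 : (0 : R) < n%:R by rewrite ltr0n.
rewrite !natrM natrX; move: (2 ^+ r.+1) (exprn_gt0 r.+1 (ltr0Sn R 1)) => e e_gt0 tn_le'.
rewrite -subr_ge0 (_ : _ - _ = (4 * e - t%:R * n%:R) * (p / (e * n%:R))).
  by rewrite mulr_ge0 ?subr_ge0 ?divr_ge0 ?mulr_ge0 // ltW.
by field; rewrite !lt0r_neq0.
Qed.

Lemma setI_eq_set1 (T : finType) (S A : {set T}) x : x \in A ->
  (S :&: A == [set x]) = (x \in S) && (S :&: (A :\ x) == set0).
Proof.
move=> Ax; rewrite setIDA; apply/eqP/andP => [SAx | [Sx /eqP SA'x]].
  by split; [have := set11 x; rewrite -SAx inE => /andP[] | rewrite SAx setDv].
by rewrite -(setD1K (_ : x \in S :&: A)) ?SA'x ?setU0 // inE Sx Ax.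
Qed.

Lemma cards_eq1_sum (T : finType) (A B : {set T}) : A \subset B ->
  (#|A| == 1%N) = (\sum_(x in B) (A == [set x]))%N :> nat.
Proof.
move=> sAB; case: cards1P => [[y Ay] | notA1].
  have By : y \in B by rewrite -sub1set -Ay.
  rewrite Ay (bigD1 y) //= eqxx big1 // => x /andP[_ xy].
  by case: eqP => // /setP /(_ y); rewrite !inE eqxx eq_sym (negPf xy).
by rewrite big1 // => x _; case: eqP => // Ax; case: notA1; exists x.
Qed.

Lemma ratio_lower_bound (R : realFieldType) (q B g D p t u : R) :
  0 < p -> 0 <= t -> 0 <= u -> p / 2 <= q -> g <= q -> B <= t * (g + D) ->
  t * D <= u * (p / 2) -> q <= B -> 1 / (t + u) <= q / B.
Proof.
move=> p_gt0 t_ge0 u_ge0 p_le_q g_le_q B_le tD_le q_le_B.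
have q_gt0 : 0 < q by apply: lt_le_trans p_le_q; rewrite divr_gt0.
have B_le_qtu : B <= q * (t + u) by nra.
have tu_gt0 : 0 < t + u by nra.
by rewrite ler_pdivrMr // mulrAC ler_pdivlMr ?mul1r //; apply: lt_le_trans q_le_B.
Qed.

Lemma exists_odd_between k : (3 <= k)%N -> exists2 r, odd r & (r.+2 <= k <= r.+3)%N.
Proof.
move=> le3k; case odd_k: (odd k).
  by exists (k - 2)%N; [rewrite oddB ?odd_k //; lia | apply/andP; split; lia].
by exists (k - 3)%N; [rewrite oddB ?odd_k //; lia | apply/andP; split; lia].
Qed.

Section SingleHit.
Variables (n k : nat) (I : finType) (H : I -> {ffun 'I_n -> 'I_n}).
Hypotheses (Hk : kwise_indep k H) (lekn : (k <= n)%N).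
Variables (V T : {set 'I_n}).

Let p : rat := #|V|%:R / n%:R.

Lemma expH_bin_moment x (T' : {set 'I_n}) i : x \notin T' -> (i < k)%N ->
  expH H (fun h => ((x \in h @^-1: V) * 'C(#|h @^-1: V :&: T'|, i))%:R)
    = 'C(#|T'|, i)%:R * p ^+ i.+1.
Proof.
move=> T'x ltik; rewrite -cards_draws.
rewrite (eq_expH H (g := fun h => \sum_(U in [set U : {set 'I_n} | U \subset T' & #|U| == i])
  (x |: U \subset h @^-1: V)%:R)) => [|h]; last by rewrite mem_mul_bin_cardsI natr_sum.
rewrite expH_sum (eq_bigr (fun=> p ^+ i.+1)) ?sumr_const ?mulr_natl // => U.
rewrite inE => /andP[sUT' /eqP cardU].
have Ux : x \notin U := contra (subsetP sUT' x) T'x.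
rewrite -(prH_expH H (fun h => x |: U \subset h @^-1: V)) (prH_kwise_subset Hk).
  by rewrite cardsU1 Ux cardU.
by rewrite cardsU1 Ux cardU ltik.
Qed.

Lemma expH_bonferroni x (T' : {set 'I_n}) r : x \notin T' -> (r < k)%N ->
  expH H (fun h => (x \in h @^-1: V)%:R *
                   \sum_(i < r.+1) (-1) ^+ i * 'C(#|h @^-1: V :&: T'|, i)%:R)
    = \sum_(i < r.+1) (-1) ^+ i * 'C(#|T'|, i)%:R * p ^+ i.+1.
Proof.
move=> T'x ltrk; rewrite (eq_expH H (g := fun h => \sum_(i < r.+1) (-1) ^+ i *
  ((x \in h @^-1: V) * 'C(#|h @^-1: V :&: T'|, i))%:R)) => [|h]; last first.
  by rewrite mulr_sumr; apply: eq_bigr => i _; rewrite natrM mulrCA.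
rewrite expH_sum; apply: eq_bigr => i _.
by rewrite expHZ expH_bin_moment ?mulrA // (leq_ltn_trans _ ltrk) // -ltnS.
Qed.

Let G r := \sum_(i < r.+1) (-1) ^+ i * 'C(#|T|.-1, i)%:R * p ^+ i.+1.

Lemma prH_single_hitE x : x \in T ->
  prH H (fun h => h @^-1: V :&: T == [set x])
    = expH H (fun h => (x \in h @^-1: V)%:R * (#|h @^-1: V :&: (T :\ x)| == 0%N)%:R).
Proof.
move=> Tx; rewrite prH_expH; apply: eq_expH => h.
by rewrite setI_eq_set1 // cards_eq0 -natrM mulnb.
Qed.

Lemma prH_single_hit_ge x r : x \in T -> odd r -> (r < k)%N ->
  G r <= prH H (fun h => h @^-1: V :&: T == [set x]).
Proof.
move=> Tx odd_r ltrk; have T'x : x \notin T :\ x by rewrite !inE eqxx.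
have cardT' : #|T :\ x| = #|T|.-1 by rewrite (cardsD1 x T) Tx.
rewrite prH_single_hitE // /G -cardT' -(expH_bonferroni T'x ltrk).
by apply: ler_expH => h; apply: ler_wpM2l; [exact: ler0n | exact: alt_bin_partial_sum_odd].
Qed.

Lemma prH_single_hit_le x r : x \in T -> ~~ odd r -> (r < k)%N ->
  prH H (fun h => h @^-1: V :&: T == [set x]) <= G r.
Proof.
move=> Tx even_r ltrk; have T'x : x \notin T :\ x by rewrite !inE eqxx.
have cardT' : #|T :\ x| = #|T|.-1 by rewrite (cardsD1 x T) Tx.
rewrite prH_single_hitE // /G -cardT' -(expH_bonferroni T'x ltrk).
by apply: ler_expH => h; apply: ler_wpM2l; [exact: ler0n | exact: alt_bin_partial_sum_even].
Qed.

Lemma prH_one_hit : prH H (fun h => #|h @^-1: V :&: T| == 1%N)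
  = \sum_(x in T) prH H (fun h => h @^-1: V :&: T == [set x]).
Proof.
under [RHS]eq_bigr do rewrite prH_expH.
rewrite prH_expH -expH_sum; apply: eq_expH => h.
by rewrite (cards_eq1_sum (subsetIr _ T)) natr_sum.
Qed.

Lemma condprH_single_hit_ge x1 : x1 \in T -> (2 * #|T| * #|V| <= n)%N ->
  (0 < #|V|)%N -> (#|T| * n <= 2 ^ k)%N -> (3 <= k)%N ->
  1 / (#|T|%:R + 8 / n%:R) <= condprH H (fun h => h @^-1: V :&: T == [set x1])
                                       (fun h => #|h @^-1: V :&: T| == 1%N).
Proof.
move=> Tx1 small_V V_gt0 tn_le le3k.
have t_gt0 : (0 < #|T|)%N by apply/card_gt0P; exists x1.
have n_gt0 : (0 < n)%N by nia.
have p_gt0 : 0 < p by rewrite divr_gt0 ?ltr0n.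
have tp_le : (#|T|.-1)%:R * p <= 1 / 2.
  have : ((2 * (#|T|.-1 * #|V|))%:R : rat) <= n%:R by rewrite ler_nat; nia.
  rewrite /p mulrA ler_pdivrMr ?ltr0n // !natrM; lra.
have [r odd_r /andP[ltrk lekr]] := exists_odd_between le3k.
have G_succ : G r.+1 = G r + 'C(#|T|.-1, r.+1)%:R * p ^+ r.+2.
  by rewrite /G big_ord_recr /= -signr_odd /= odd_r expr0 mul1r.
have G1_ge : p / 2 <= G 1.
  rewrite /G big_ord_recr big_ord1 /= expr0 expr1 bin0 bin1; nra.
have tail_le := bin_tail_mul_le n_gt0 (ltW p_gt0) tp_le
  (leq_trans tn_le (leq_pexp2l (m := 2) isT lekr)).
rewrite /condprH prH_one_hit.
rewrite (eq_prH _ (E' := fun h => h @^-1: V :&: T == [set x1])) => [|h]; last first.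
  by case: eqP => // ->; rewrite cards1.
apply: (ratio_lower_bound p_gt0 (ler0n _ _) _ _ _ _ tail_le).
- by rewrite divr_ge0 ?ler0n.
- exact: le_trans G1_ge (prH_single_hit_ge (r := 1) Tx1 isT (leq_trans _ le3k)).
- exact: prH_single_hit_ge Tx1 odd_r (ltnW ltrk).
- rewrite -G_succ mulr_natl -sumr_const.
  by apply: ler_sum => x Tx; apply: prH_single_hit_le; rewrite //= odd_r.
- by rewrite (bigD1 x1) //= lerDl sumr_ge0 // => x _; apply: prH_ge0.
Qed.

End SingleHit.

Lemma cst_div_nat_eventually_le (R : archiRealFieldType) (c e : R) : 0 < e ->
  exists N, forall m, (N <= m)%N -> `|c / m%:R| <= e.
Proof.
move=> e_gt0; exists (Num.Def.archi_bound (`|c| / e)) => m le_bm.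
have bound_gt : `|c| / e < m%:R.
  apply: lt_le_trans (archi_boundP _) _; last by rewrite ler_nat.
  by rewrite divr_ge0 // ltW.
have m_gt0 : 0 < m%:R :> R by apply: le_lt_trans bound_gt; rewrite divr_ge0 // ltW.
by rewrite normrM normfV normr_nat ler_pdivrMr // -ler_pdivrMl // mulrC ltW.
Qed.

Definition dyadic_block (n j : nat) : {set 'I_n} :=
  [set v : 'I_n | (2 ^ j < 2 * v.+1)%N && (v.+1 <= 2 ^ j)%N].

Lemma Sj_preimset n j h : Sj j h = h @^-1: dyadic_block n j.
Proof. by apply/setP => y; rewrite !inE. Qed.

Lemma card_dyadic_block_gt0 n j : (2 ^ j <= n)%N -> (0 < #|dyadic_block n j|)%N.
Proof.
move=> le_n; have lt_n : ((2 ^ j).-1 < n)%N by rewrite prednK ?expn_gt0.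
apply/card_gt0P; exists (Ordinal lt_n); rewrite inE /= prednK ?expn_gt0 // leqnn andbT.
by rewrite -[X in (X < _)%N]mul1n ltn_mul2r expn_gt0.
Qed.

Lemma card_dyadic_block_le n j : (#|dyadic_block n j| <= 2 ^ j)%N.
Proof.
rewrite cardE -(size_map val) -[X in (_ <= X)%N](size_iota 0); apply: uniq_leq_size.
  by rewrite (map_inj_uniq val_inj) enum_uniq.
by move=> i /mapP[v]; rewrite mem_enum inE => /andP[_ le_v] ->; rewrite mem_iota.
Qed.

Theorem mainTheorem9 :
  exists eps : nat -> rat,
    (forall e : rat, 0 < e -> exists N : nat, forall m : nat,
        (N <= m)%N -> `|eps m| <= e) /\
    forall (n k : nat) (I : finType) (H : I -> {ffun 'I_n -> 'I_n})
           (t : nat) (T : {set 'I_n}) (x1 : 'I_n),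
      (n ^ 2 <= 2 ^ k)%N ->          (* k >= 2 log n *)
      (k <= n)%N ->
      kwise_indep k H ->
      (2 * t < n)%N ->               (* t < n/2 *)
      #|T| = t -> x1 \in T ->
      let j := trunc_log 2 (n %/ (2 * t)) in   (* j = floor(log(n/2t)) *)
      1 / (t%:R + eps n) <=
        condprH H (fun h => Sj j h :&: T == [set x1])
                  (fun h => #|Sj j h :&: T| == 1%N).
Proof.
exists (fun m => 8 / m%:R); split=> [e | n k I H t T x1 nk kn Hk tn cardT Tx1].
  exact: cst_div_nat_eventually_le.
rewrite /=; set j := trunc_log 2 _.
have t_gt0 : (0 < t)%N by rewrite -cardT; apply/card_gt0P; exists x1.
have le3k : (3 <= k)%N.
  have : (3 ^ 2 <= 2 ^ k)%N by apply: leq_trans nk; rewrite leq_exp2r //; lia.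
  by case: k {Hk kn nk} => [|[|[|k]]].
have dyadic_le : (2 * t * 2 ^ j <= n)%N.
  by rewrite mulnC -leq_divRL ?trunc_logP ?divn_gt0 //; lia.
rewrite (eq_condprH _ (A' := fun h => h @^-1: dyadic_block n j :&: T == [set x1])
                    (B' := fun h => #|h @^-1: dyadic_block n j :&: T| == 1%N)) => [|h|h];
  try by rewrite Sj_preimset.
rewrite -cardT; apply: (condprH_single_hit_ge Hk kn Tx1 _ _ _ le3k); rewrite ?cardT.
- by apply: leq_trans dyadic_le; rewrite leq_mul2l card_dyadic_block_le orbT.
- by apply: card_dyadic_block_gt0; apply: leq_trans dyadic_le; rewrite leq_pmull ?muln_gt0.
- by apply: leq_trans nk; rewrite expnS expn1 leq_mul2r; lia.
Qed.
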